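(* For every $0<p<2$ there exist a separable Hilbert space $\mathcal{H}$, a finite collection $\mathcal{A}$ of observables on $\mathcal{H}$, and states $\rho,\tau,\omega\in\mathcal{S}(\mathcal{H})$ such that $$d_{\mathcal{A},p}(\rho,\omega)>d_{\mathcal{A},p}(\rho,\tau)+d_{\mathcal{A},p}(\tau,\omega).$$
   Context: For a Hilbert space $\mathcal{H}$, $\mathcal{S}(\mathcal{H})$ is the set of positive trace-class operators with unit trace (states); observables are self-adjoint operators. For an operator $A$ on $\mathcal{H}$, $A^T$ is the operator on the dual $\mathcal{H}^*$ given by $(A^T\eta)(\varphi)=\eta(A\varphi)$. Couplings: $\mathcal{C}(\rho,\omega)=\{\Pi\in\mathcal{S}(\mathcal{H}\otimes\mathcal{H}^* ): \mathrm{tr}_{\mathcal{H}^*}[\Pi]=\omega,\ \mathrm{tr}_{\mathcal{H}}[\Pi]=\rho^T\}$. For a finite collection $\mathcal{A}=\{A_1,\dots,A_K\}$ of observables and $0<p<\infty$, $C_{\mathcal{A},p}=\sum_{k=1}^K|A_k\otimes I^T-I\otimes A_k^T|^p$, $D_{\mathcal{A},p}(\rho,\omega)=\big(\inf_{\Pi\in\mathcal{C}(\rho,\omega)}\mathrm{tr}[\Pi C_{\mathcal{A},p}]\big)^{\min\{1/p,1\}}$, and $$d_{\mathcal{A},p}(\rho,\omega)=\Big(D_{\mathcal{A},p}^{\max\{p,1\}}(\rho,\omega)-\tfrac12\big(D_{\mathcal{A},p}^{\max\{p,1\}}(\rho,\rho)+D_{\mathcal{A},p}^{\max\{p,1\}}(\omega,\omega)\big)\Big)^{\min\{1/p,1\}}.$$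 *)

From HB Require Import structures.
From mathcomp Require Import all_boot all_order all_algebra.
From mathcomp Require Import complex mxtens spectral.
From mathcomp Require Import all_classical all_reals.
From mathcomp Require Import exp.
Set Implicit Arguments. Unset Strict Implicit. Unset Printing Implicit Defensive.
Import Order.TTheory GRing.Theory Num.Theory.
Local Open Scope ring_scope.
Local Open Scope classical_set_scope.

Section QOT.
Variable R : realType.
Local Notation C := (complex R).

Definition adj m n (A : 'M[C]_(m, n)) : 'M[C]_(n, m) := map_mx (@Num.conj C) A^T.

Definition selfadj n (A : 'M[C]_n) : Prop := adj A = A.

Definition psd n (A : 'M[C]_n) : Prop :=
  forall v : 'cV[C]_n, 0 <= (adj v *m A *m v) 0 0.

Definition state n (rho : 'M[C]_n) : Prop := psd rho /\ \tr rho = 1.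

(* H (x) H^* is C^(n*n); basis vector e_i (x) e_j^* has index mxtens_index (i,j) *)
Definition tens n (A B : 'M[C]_n) : 'M[C]_(n * n) :=
  \matrix_(a, b) (A (mxtens_unindex a).1 (mxtens_unindex b).1 *
                  B (mxtens_unindex a).2 (mxtens_unindex b).2).

(* partial trace over H^* (second factor) and over H (first factor) *)
Definition ptr2 n (P : 'M[C]_(n * n)) : 'M[C]_n :=
  \matrix_(i, k) \sum_(j < n) P (mxtens_index (i, j)) (mxtens_index (k, j)).
Definition ptr1 n (P : 'M[C]_(n * n)) : 'M[C]_n :=
  \matrix_(j, l) \sum_(i < n) P (mxtens_index (i, j)) (mxtens_index (i, l)).

(* the transpose A^T on the dual space, in the dual basis, is the matrix transpose *)
Definition coupling n (rho omega : 'M[C]_n) (P : 'M[C]_(n * n)) : Prop :=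
  state P /\ ptr2 P = omega /\ ptr1 P = rho^T.

(* |X|^p for a self-adjoint X, via the spectral decomposition
   X = P^-1 diag(lambda) P (P unitary, lambda real) *)
Definition abspow n (X : 'M[C]_n) (p : R) : 'M[C]_n :=
  invmx (spectralmx X) *m
  diag_mx (map_mx (fun l : C => Complex (powR `|complex.Re l| p) 0) (spectral_diag X))
  *m spectralmx X.

Definition cost n (As : seq 'M[C]_n) (p : R) : 'M[C]_(n * n) :=
  \sum_(A <- As) abspow (tens A 1%:M - tens 1%:M A^T) p.

Definition Dinf n (As : seq 'M[C]_n) (p : R) (rho omega : 'M[C]_n) : R :=
  inf [set x : R | exists P, coupling rho omega P /\
                     x = complex.Re (\tr (P *m cost As p))].

Definition D n (As : seq 'M[C]_n) (p : R) (rho omega : 'M[C]_n) : R :=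
  powR (Dinf As p rho omega) (Num.min (p^-1) 1).

Definition dA n (As : seq 'M[C]_n) (p : R) (rho omega : 'M[C]_n) : R :=
  let e := Num.max p 1 in
  powR (powR (D As p rho omega) e
        - 2^-1 * (powR (D As p rho rho) e + powR (D As p omega omega) e))
       (Num.min (p^-1) 1).

End QOT.

From HB Require Import structures.
From mathcomp Require Import all_boot all_order all_algebra.
From mathcomp Require Import complex mxtens spectral.
From mathcomp Require Import all_classical all_reals.
From mathcomp Require Import exp.
From mathcomp Require Import ring lra.
Set Implicit Arguments. Unset Strict Implicit. Unset Printing Implicit Defensive.
Import Order.TTheory GRing.Theory Num.Theory.
Local Open Scope ring_scope.

(* Take H = C^2, the single observable A = |0><0| and the states |0><0|,
   tau = |+><+| and |1><1|.  The matrix A (x) I - I (x) A^T is diagonal with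
   entries in {0, 1, -1}, so for every p the cost C_{A,p} is the projection onto
   e_0 (x) e_1^* and e_1 (x) e_0^*: a coupling pays its weight off the diagonal.
   The diagonal of a coupling is a classical coupling of the diagonals of the two
   states, so the cost is at least |omega_00 - rho_00|; when one of the states is
   |0> or |1> the product coupling attains this bound, which gives
   D(|0>,|1>) = 1, D(|0>,|0>) = D(|1>,|1>) = 0 and D(|0>,tau) = D(tau,|1>) = 1/2.
   For tau with itself the classical bound is 0, but positivity of the coupling
   forces its weight off the diagonal to be 1/2 again.  Hence d(|0>,|1>) = 1 while
   d(|0>,tau) = d(tau,|1>) = (1/4)^min(1/p,1), and 2 (1/4)^min(1/p,1) < 1 exactly
   when p < 2. *)

Section Matrices.
Variable R : realType.
Local Notation C := (complex R).

Lemma ReD (x y : C) : complex.Re (x + y) = complex.Re x + complex.Re y.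
Proof. exact: raddfD. Qed.

Lemma Re_realM (k : R) (z : C) : complex.Re ((k%:C)%C * z) = k * complex.Re z.
Proof. by case: z => a b /=; ring. Qed.

Lemma Re_le (x y : C) : x <= y -> complex.Re x <= complex.Re y.
Proof. by rewrite lecE => /andP[]. Qed.

Lemma conj_realc (x : R) : Num.conj (x%:C)%C = (x%:C)%C.
Proof. exact: conjc_real. Qed.

Lemma Re_half : complex.Re (2^-1 : C) = 2^-1.
Proof. by have -> : (2^-1 : C) = ((2^-1 : R)%:C)%C by rewrite fmorphV rmorph_nat. Qed.

Lemma halfD : 2^-1 + 2^-1 = 1 :> C.
Proof. by rewrite [RHS]splitr mul1r. Qed.

Lemma half_ge0 : 0 <= 2^-1 :> C.
Proof. by rewrite invr_ge0 ler0n. Qed.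

Lemma sum_ord2 (F : 'I_2 -> C) : \sum_i F i = F 0 + F 1.
Proof. by rewrite big_ord_recr big_ord1; congr (F _ + F _); exact: val_inj. Qed.

Lemma mxtrace_delta n (i : 'I_n) : \tr (delta_mx i i : 'M[C]_n) = 1.
Proof.
by rewrite -(mul_delta_mx (0 : 'I_1)) mxtrace_mulC mul_delta_mx trace_mx11 mxE !eqxx.
Qed.

Lemma diag_delta n (i : 'I_n) : diag_mx (delta_mx 0 i) = delta_mx i i :> 'M[C]_n.
Proof.
apply/matrixP => j k; rewrite !mxE eqxx /=.
by case: (j =P i) => [->|_]; rewrite ?mul0rn // eq_sym.
Qed.

Lemma adjD m n (A B : 'M[C]_(m, n)) : adj (A + B) = adj A + adj B.
Proof. by apply/matrixP => i j; rewrite !mxE rmorphD. Qed.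

Lemma adjZ m n (c : C) (A : 'M[C]_(m, n)) : adj (c *: A) = Num.conj c *: adj A.
Proof. by apply/matrixP => i j; rewrite !mxE rmorphM. Qed.

Lemma adjM m n k (A : 'M[C]_(m, n)) (B : 'M[C]_(n, k)) :
  adj (A *m B) = adj B *m adj A.
Proof. by rewrite /adj trmx_mul map_mxM. Qed.

Lemma adjK m n (A : 'M[C]_(m, n)) : adj (adj A) = A.
Proof. by apply/matrixP => i j; rewrite !mxE conjCK. Qed.

Lemma adj_delta m n (i : 'I_m) (j : 'I_n) :
  adj (delta_mx i j : 'M[C]__) = delta_mx j i.
Proof. by rewrite /adj trmx_delta map_delta_mx. Qed.

Lemma selfadj_delta n (i : 'I_n) : selfadj (delta_mx i i : 'M[C]_n).
Proof. exact: adj_delta. Qed.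

Lemma delta_form n (P : 'M[C]_n) i j :
  (delta_mx 0 i : 'rV[C]_n) *m P *m delta_mx j 0 = (P i j)%:M.
Proof. by apply/matrixP => k l; rewrite [k]ord1 [l]ord1 -rowE -colE !mxE. Qed.

End Matrices.

Section PositiveMatrices.
Variable R : realType.
Local Notation C := (complex R).

Lemma psd_diag_ge0 n (P : 'M[C]_n) i : psd P -> 0 <= P i i.
Proof. by move=> /(_ (delta_mx i 0)); rewrite adj_delta delta_form mxE. Qed.

Lemma psdZ n (c : C) (P : 'M[C]_n) : 0 <= c -> psd P -> psd (c *: P).
Proof. by move=> c0 hP v; rewrite -scalemxAr -scalemxAl mxE; exact: mulr_ge0. Qed.

Lemma psd_pair_form n (P : 'M[C]_n) a b (x y : R) : psd P ->
  0 <= x ^+ 2 * complex.Re (P a a) + x * y * complex.Re (P a b + P b a)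
       + y ^+ 2 * complex.Re (P b b).
Proof.
move=> /(_ ((x%:C)%C *: delta_mx a 0 + (y%:C)%C *: delta_mx b 0)) /Re_le.
rewrite adjD !adjZ !adj_delta !conj_realc mulmxDl mulmxDr !mulmxDl.
rewrite -!scalemxAl -!scalemxAr !delta_form !scale_scalar_mx.
have scalar_mxD (c d : C) : c%:M + d%:M = (c + d)%:M :> 'M[C]_1 by rewrite raddfD.
have scalar_mx11 (c : C) : (c%:M : 'M[C]_1) 0 0 = c by rewrite mxE mulr1n.
rewrite !scalar_mxD scalar_mx11 !ReD !Re_realM.
have -> : complex.Re (0 : C) = 0 by [].
nra.
Qed.

(* Evaluate the form at [s e_a - 2 P_aa e_b], s = Re (P_ab + P_ba): this gives
   [P_aa (4 P_aa P_bb - s^2)]. *)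
Lemma psd_cross_bound n (P : 'M[C]_n) a b : psd P -> 0 < complex.Re (P a a) ->
  complex.Re (P a b + P b a) ^+ 2 <= 4 * complex.Re (P a a) * complex.Re (P b b).
Proof.
move=> hP ha; have := psd_pair_form a b (complex.Re (P a b + P b a))
  (- 2 * complex.Re (P a a)) hP.
set s := complex.Re (P a b + P b a); nra.
Qed.

Definition pure n (u : 'cV[C]_n) : 'M[C]_n := u *m adj u.

Lemma psd_pure n (u : 'cV[C]_n) : psd (pure u).
Proof.
move=> v; rewrite /pure !mulmxA -mulmxA -[v in adj u *m v]adjK -adjM mxE big_ord1.
by rewrite [X in _ * X]mxE [in X in _ * X]mxE mul_conjC_ge0.
Qed.

Definition rank1_psd n (X : 'M[C]_n) : Prop :=
  exists (c : C) (u : 'cV[C]_n), 0 <= c /\ X = c *: pure u.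

Lemma rank1_psd_psd n (X : 'M[C]_n) : rank1_psd X -> psd X.
Proof. by move=> [c [u [c0 ->]]]; exact/psdZ/psd_pure. Qed.

Lemma rank1_psd_delta n (i : 'I_n) : rank1_psd (delta_mx i i : 'M[C]_n).
Proof.
exists 1, (delta_mx i 0); split; first exact: ler01.
by rewrite scale1r /pure adj_delta mul_delta_mx.
Qed.

Lemma rank1_psd_const n (c : C) : 0 <= c -> rank1_psd (const_mx c : 'M[C]_n).
Proof.
move=> c0; exists c, (const_mx 1); split => //.
by apply/matrixP => i j; rewrite !mxE big_ord1 !mxE rmorph1 !mulr1.
Qed.

Lemma state_delta n (i : 'I_n) : state (delta_mx i i : 'M[C]_n).
Proof. by split; [exact/rank1_psd_psd/rank1_psd_delta | exact: mxtrace_delta]. Qed.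

End PositiveMatrices.

Section Tensors.
Variable R : realType.
Local Notation C := (complex R).

Lemma tensE n (A B : 'M[C]_n) : tens A B = A *t B.
Proof. by []. Qed.

Lemma mxtens_index_eq m n (i k : 'I_m) (j l : 'I_n) :
  (mxtens_index (i, j) == mxtens_index (k, l)) = (i == k) && (j == l).
Proof. by rewrite (can_eq (@mxtens_indexK m n)) xpair_eqE. Qed.

Lemma big_mxtens m n (F : 'I_(m * n) -> C) :
  \sum_k F k = \sum_i \sum_j F (mxtens_index (i, j)).
Proof.
rewrite pair_big /=; apply: reindex => /=; exists (@mxtens_unindex m n) => k _.
  by rewrite mxtens_indexK; case: k.
exact: mxtens_unindexK.
Qed.

Lemma mxtrace_tens m n (A : 'M[C]_m) (B : 'M[C]_n) : \tr (A *t B) = \tr A * \tr B.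
Proof.
rewrite /mxtrace big_mxtens mulr_suml; apply: eq_bigr => i _.
by rewrite mulr_sumr; apply: eq_bigr => j _; rewrite tensmxE.
Qed.

Lemma ptr2_tens n (A B : 'M[C]_n) : ptr2 (A *t B) = \tr B *: A.
Proof.
apply/matrixP => i k; rewrite !mxE /mxtrace mulr_suml.
by apply: eq_bigr => j _; rewrite tensmxE mulrC.
Qed.

Lemma ptr1_tens n (A B : 'M[C]_n) : ptr1 (A *t B) = \tr A *: B.
Proof.
apply/matrixP => j l; rewrite !mxE /mxtrace mulr_suml.
by apply: eq_bigr => i _; rewrite tensmxE.
Qed.

Lemma adj_tens m n p q (A : 'M[C]_(m, n)) (B : 'M[C]_(p, q)) :
  adj (A *t B) = adj A *t adj B.
Proof. by rewrite /adj trmx_tens map_mxT. Qed.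

Lemma scale_tens m n p q (c d : C) (A : 'M[C]_(m, n)) (B : 'M[C]_(p, q)) :
  (c *: A) *t (d *: B) = (c * d) *: (A *t B).
Proof. by apply/matrixP => i j; rewrite !mxE mulrACA. Qed.

Lemma pure_tens m n (u : 'cV[C]_m) (v : 'cV[C]_n) : pure u *t pure v = pure (u *t v).
Proof. by rewrite /pure -tensmx_mul -adj_tens. Qed.

Lemma rank1_psd_tens m n (X : 'M[C]_m) (Y : 'M[C]_n) :
  rank1_psd X -> rank1_psd Y -> psd (X *t Y).
Proof.
move=> [c [u [c0 ->]]] [d [v [d0 ->]]].
by rewrite scale_tens pure_tens; exact/psdZ/psd_pure/mulr_ge0.
Qed.

Lemma product_coupling n (rho omega : 'M[C]_n) :
  \tr rho = 1 -> \tr omega = 1 -> psd (omega *t rho^T) ->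
  coupling rho omega (tens omega rho^T).
Proof.
move=> tr_rho tr_omega psdP; rewrite tensE; split; [split|split] => //.
- by rewrite mxtrace_tens mxtrace_tr tr_rho tr_omega mulr1.
- by rewrite ptr2_tens mxtrace_tr tr_rho scale1r.
- by rewrite ptr1_tens tr_omega scale1r.
Qed.

Lemma coupling_ptr2E n (rho omega : 'M[C]_n) P : coupling rho omega P ->
  forall i k, \sum_j P (mxtens_index (i, j)) (mxtens_index (k, j)) = omega i k.
Proof. by move=> [_ [<- _]] i k; rewrite mxE. Qed.

Lemma coupling_ptr1E n (rho omega : 'M[C]_n) P : coupling rho omega P ->
  forall j l, \sum_i P (mxtens_index (i, j)) (mxtens_index (i, l)) = rho l j.
Proof. by move=> [_ [_ /matrixP h]] j l; have := h j l; rewrite !mxE. Qed.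

End Tensors.

Section SpectralPower.
Variable R : realType.
Local Notation C := (complex R).

Lemma tripotent_root (l : C) : l ^+ 3 = l -> [\/ l = 0, l = 1 | l = -1].
Proof.
move=> l3; have : l * (l - 1) * (l + 1) = l ^+ 3 - l by ring.
rewrite l3 subrr => /eqP; rewrite !mulf_eq0 subr_eq0 addr_eq0.
by case/orP => [/orP[]|] /eqP ->; [exact: Or31 | exact: Or32 | exact: Or33].
Qed.

Lemma idempotent_root (l : C) : l ^+ 2 = l -> l = 0 \/ l = 1.
Proof.
move=> l2; have : l * (l - 1) = 0 by rewrite mulrBr mulr1 -expr2 l2 subrr.
by move/eqP; rewrite mulf_eq0 subr_eq0 => /orP[] /eqP; [left | right].
Qed.

(* The eigenvalues of a normal tripotent are 0 and +-1, where |.|^p and (.)^2 agree. *)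
Lemma abspow_tripotent n (X : 'M[C]_n) (p : R) : p != 0 ->
  X \is normalmx -> X *m X *m X = X -> abspow X p = X *m X.
Proof.
move=> p0 /orthomx_spectralP XE X3; rewrite /abspow.
set S := spectralmx X in XE *; set d := spectral_diag X in XE *.
have Su : S \in unitmx by exact: spectral_unit.
have d3 : diag_mx d *m diag_mx d *m diag_mx d = diag_mx d.
  move: X3; rewrite XE !mulmxA !(mulmxK Su) => /(congr1 (fun Y => S *m Y *m invmx S)).
  by rewrite !mulmxA (mulmxV Su) !mul1mx !(mulmxK Su).
have -> : diag_mx (map_mx (fun l : C => Complex (powR `|complex.Re l| p) 0) d)
    = diag_mx d *m diag_mx d.
  rewrite mulmx_diag; congr diag_mx; apply/rowP => j; rewrite !mxE.
  have : d 0 j ^+ 3 = d 0 j.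
    move/matrixP: d3 => /(_ j j); rewrite !mulmx_diag !mxE eqxx !mulr1n.
    by rewrite !exprS expr0 mulr1 mulrA.
  case/tripotent_root => -> /=.
  - by rewrite normr0 powR0 // mul0r.
  - by rewrite normr1 powR1 mulr1.
  - by rewrite normrN1 powR1 mulrN1 opprK.
by rewrite XE !mulmxA (mulmxK Su).
Qed.

Lemma diag_normalmx n (d : 'rV[C]_n) : diag_mx d \is normalmx.
Proof. by apply/normalmxP; rewrite tr_diag_mx map_diag_mx diag_mxC. Qed.

Lemma tens_diag m n (a : 'rV[C]_m) (b : 'rV[C]_n) :
  diag_mx a *t diag_mx b
  = diag_mx (\row_k (a 0 (mxtens_unindex k).1 * b 0 (mxtens_unindex k).2)).
Proof.
apply/matrixP => k l.
case: (mxtens_indexP k) => i j; case: (mxtens_indexP l) => i' j'.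
rewrite tensmxE !mxE mxtens_index_eq mxtens_indexK /=.
by case: (i =P i'); case: (j =P j'); rewrite /= ?mulr0 ?mul0r.
Qed.

Lemma cost_diag_proj n (a : 'rV[C]_n) (p : R) : p != 0 ->
  (forall i, a 0 i ^+ 2 = a 0 i) ->
  cost [:: diag_mx a] p
  = diag_mx (\row_k (a 0 (mxtens_unindex k).1 - a 0 (mxtens_unindex k).2) ^+ 2).
Proof.
move=> p0 a2; rewrite /cost big_seq1 !tensE tr_diag_mx -diag_const_mx !tens_diag.
rewrite -(raddfB (@diag_mx _ _)) abspow_tripotent ?diag_normalmx //.
  by rewrite mulmx_diag; congr diag_mx; apply/rowP => k; rewrite !mxE mulr1 mul1r expr2.
rewrite !mulmx_diag; congr diag_mx; apply/rowP => k; rewrite !mxE mulr1 mul1r.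
by case: (idempotent_root (a2 (mxtens_unindex k).1)) => ->;
  case: (idempotent_root (a2 (mxtens_unindex k).2)) => ->; ring.
Qed.

End SpectralPower.

Section OptimalCost.
Variable R : realType.
Local Notation C := (complex R).

Lemma Dinf_eq n (As : seq 'M[C]_n) (p : R) (rho omega : 'M[C]_n) (v : R) :
  (forall P, coupling rho omega P -> v <= complex.Re (\tr (P *m cost As p))) ->
  (exists2 P, coupling rho omega P & complex.Re (\tr (P *m cost As p)) = v) ->
  Dinf As p rho omega = v.
Proof.
move=> lb [P cP Pv]; rewrite /Dinf.
match goal with |- inf ?T = _ => set S := T end.
have lbS : lbound S v by move=> _ [Q [cQ ->]]; exact: lb.
have Sv : S v by exists P.
apply/eqP; rewrite eq_le; apply/andP; split.
- exact: (ge_inf (ex_intro _ v lbS)).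
- by apply: lb_le_inf => //; exists v.
Qed.

Lemma Dinf_product n (As : seq 'M[C]_n) (p : R) (rho omega : 'M[C]_n) (v : R) :
  \tr rho = 1 -> \tr omega = 1 -> psd (omega *t rho^T) ->
  (forall P, coupling rho omega P -> v <= complex.Re (\tr (P *m cost As p))) ->
  complex.Re (\tr ((omega *t rho^T) *m cost As p)) = v ->
  Dinf As p rho omega = v.
Proof.
move=> tr_rho tr_omega psdP lb Pv; apply: Dinf_eq => //.
by exists (tens omega rho^T) => //; exact: product_coupling.
Qed.

End OptimalCost.

Section QubitExample.
Variable R : realType.
Local Notation C := (complex R).
Local Notation rho0 := (delta_mx 0 0 : 'M[C]_2).
Local Notation rho1 := (delta_mx 1 1 : 'M[C]_2).
Local Notation tau := (const_mx 2^-1 : 'M[C]_2).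
Local Notation entry P i j k l := (P (mxtens_index (i, j)) (mxtens_index (k, l))).

Lemma qubit_entries :
  ((rho0 0 0 = 1) * (rho0 1 1 = 0) * (rho1 0 0 = 0) * (rho1 1 1 = 1)
   * (tau 0 0 = 2^-1) * (tau 1 1 = 2^-1))%type.
Proof. by do !split; rewrite mxE. Qed.

Lemma mxtrace_tau : \tr tau = 1.
Proof. by rewrite /mxtrace sum_ord2 !mxE halfD. Qed.

Lemma rank1_psd_tau : rank1_psd tau.
Proof. exact/rank1_psd_const/half_ge0. Qed.

Lemma state_tau : state tau.
Proof. by split; [exact/rank1_psd_psd/rank1_psd_tau | exact: mxtrace_tau]. Qed.

Lemma tr_cost_proj0 (p : R) (P : 'M[C]_(2 * 2)) : p != 0 ->
  \tr (P *m cost [:: rho0] p) = entry P 0 1 0 1 + entry P 1 0 1 0.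
Proof.
move=> p0; rewrite -diag_delta cost_diag_proj //; last first.
  by move=> i; rewrite mxE; case: (_ && _); rewrite ?expr1n ?expr0n.
by rewrite mul_mx_diag /mxtrace big_mxtens !sum_ord2 !mxE !mxtens_indexK /=; ring.
Qed.

Lemma coupling_gap_le_cost (rho omega : 'M[C]_2) P : coupling rho omega P ->
  `|omega 0 0 - rho 0 0| <= entry P 0 1 0 1 + entry P 1 0 1 0.
Proof.
move=> cP; have [[psdP _] _] := cP.
rewrite -(coupling_ptr2E cP) -(coupling_ptr1E cP) !sum_ord2.
rewrite (addrC (entry P 0 0 0 0)) addrKA.
by rewrite (le_trans (ler_normB _ _)) // !ger0_norm ?psd_diag_ge0.
Qed.

(* Write x for the real parts of the entries of P.  The diagonal marginals give
   x_(11,11) = x_(00,00), x_(10,10) = x_(01,01) and x_(00,00) + x_(01,01) = 1/2, so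
   the claim is x_(00,00) <= 1/4.  Otherwise psd_cross_bound applies to the pairs
   (00,10) and (11,01), whose cross sums add up to 1 by the off-diagonal marginals,
   and 1/2 <= 8 x_(00,00) x_(01,01) < 2 (x_(00,00) + x_(01,01))^2 = 1/2. *)
Lemma tau_tau_cost_ge_half P : coupling tau tau P ->
  2^-1 <= complex.Re (entry P 0 1 0 1 + entry P 1 0 1 0).
Proof.
move=> cP; have [[psdP _] _] := cP.
pose x i j k l := complex.Re (entry P i j k l).
have m2 i k : x i 0 k 0 + x i 1 k 1 = 2^-1.
  have := congr1 (@complex.Re R) (coupling_ptr2E cP i k).
  by rewrite sum_ord2 mxE ReD Re_half.
have m1 j l : x 0 j 0 l + x 1 j 1 l = 2^-1.
  have := congr1 (@complex.Re R) (coupling_ptr1E cP j l).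
  by rewrite sum_ord2 mxE ReD Re_half.
have cross i j k l : 0 < x i j i j ->
    (x i j k l + x k l i j) ^+ 2 <= 4 * x i j i j * x k l k l.
  by move=> pos; rewrite /x -ReD; exact: psd_cross_bound.
have x11E : x 1 1 1 1 = x 0 0 0 0 by have := m2 0 0; have := m1 1 1; lra.
have x10E : x 1 0 1 0 = x 0 1 0 1 by have := m2 0 0; have := m1 0 0; lra.
rewrite ReD -/(x 0 1 0 1) -/(x 1 0 1 0) x10E.
have [small|big] := lerP (x 0 0 0 0) 4^-1; first by have := m2 0 0; lra.
have x00_gt0 : 0 < x 0 0 0 0 by lra.
have := cross 0 0 1 0 x00_gt0; rewrite x10E => cs1.
have := cross 1 1 0 1; rewrite x11E => /(_ x00_gt0) cs2.
have := m2 0 0; have := m2 0 1; have := m2 1 0.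
have := sqr_ge0 (x 0 0 1 0 + x 1 0 0 0 - 2^-1).
nra.
Qed.

Lemma Dinf_from_rho0 (p : R) (omega : 'M[C]_2) : p != 0 ->
  \tr omega = 1 -> rank1_psd omega ->
  Dinf [:: rho0] p rho0 omega = complex.Re (omega 1 1).
Proof.
move=> p0 tr_omega r1_omega; apply: Dinf_product => //.
- exact: mxtrace_delta.
- by rewrite trmx_delta; exact: rank1_psd_tens r1_omega (rank1_psd_delta _ 0).
- move=> P /coupling_gap_le_cost; rewrite tr_cost_proj0 // qubit_entries.
  rewrite -tr_omega /mxtrace sum_ord2 opprD addrA subrr add0r normrN ger0_norm.
    exact: Re_le.
  exact/psd_diag_ge0/rank1_psd_psd.
- by rewrite trmx_delta tr_cost_proj0 // !tensmxE !qubit_entries mulr0 mulr1 add0r.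
Qed.

Lemma Dinf_to_rho1 (p : R) (rho : 'M[C]_2) : p != 0 ->
  \tr rho = 1 -> rank1_psd rho^T ->
  Dinf [:: rho0] p rho rho1 = complex.Re (rho 0 0).
Proof.
move=> p0 tr_rho r1_rho; apply: Dinf_product => //.
- exact: mxtrace_delta.
- exact: rank1_psd_tens (rank1_psd_delta _ 1) r1_rho.
- move=> P /coupling_gap_le_cost.
  rewrite tr_cost_proj0 // qubit_entries sub0r normrN ger0_norm; first exact: Re_le.
  by have := psd_diag_ge0 0 (rank1_psd_psd r1_rho); rewrite mxE.
- by rewrite tr_cost_proj0 // !tensmxE !qubit_entries ![rho^T _ _]mxE mul0r mul1r add0r.
Qed.

Lemma Dinf_tau_tau (p : R) : p != 0 -> Dinf [:: rho0] p tau tau = 2^-1.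
Proof.
move=> p0; apply: Dinf_product; rewrite ?mxtrace_tau ?trmx_const //.
- exact: rank1_psd_tens rank1_psd_tau rank1_psd_tau.
- by move=> P cP; rewrite tr_cost_proj0 //; exact: tau_tau_cost_ge_half.
- by rewrite tr_cost_proj0 // !tensmxE !mxE -mulrDr halfD mulr1 Re_half.
Qed.

Lemma Dinf_rho0_rho1 (p : R) : p != 0 -> Dinf [:: rho0] p rho0 rho1 = 1.
Proof.
by move=> p0; rewrite Dinf_from_rho0 ?mxtrace_delta ?qubit_entries //; exact: rank1_psd_delta.
Qed.

Lemma Dinf_rho0_rho0 (p : R) : p != 0 -> Dinf [:: rho0] p rho0 rho0 = 0.
Proof.
by move=> p0; rewrite Dinf_from_rho0 ?mxtrace_delta ?qubit_entries //; exact: rank1_psd_delta.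
Qed.

Lemma Dinf_rho1_rho1 (p : R) : p != 0 -> Dinf [:: rho0] p rho1 rho1 = 0.
Proof.
move=> p0; rewrite Dinf_to_rho1 ?mxtrace_delta ?trmx_delta ?qubit_entries //.
exact: rank1_psd_delta.
Qed.

Lemma Dinf_rho0_tau (p : R) : p != 0 -> Dinf [:: rho0] p rho0 tau = 2^-1.
Proof.
move=> p0; rewrite Dinf_from_rho0 ?mxtrace_tau ?qubit_entries ?Re_half //.
exact: rank1_psd_tau.
Qed.

Lemma Dinf_tau_rho1 (p : R) : p != 0 -> Dinf [:: rho0] p tau rho1 = 2^-1.
Proof.
move=> p0; rewrite Dinf_to_rho1 ?mxtrace_tau ?trmx_const ?qubit_entries ?Re_half //.
exact: rank1_psd_tau.
Qed.

End QubitExample.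

Section Exponents.
Variable R : realType.

Lemma min_inv_max_mul (p : R) : 0 < p -> Num.min p^-1 1 * Num.max p 1 = 1.
Proof.
move=> p_gt0; case: (lerP p 1) => p1.
  by rewrite (min_r (_ : 1 <= p^-1)) ?(max_r p1) ?mulr1 // invf_ge1.
rewrite (min_l (_ : p^-1 <= 1)) ?(max_l (ltW p1)) ?mulVf ?gt_eqF //.
by rewrite invf_le1 // ltW.
Qed.

Lemma powR_min_inv_max (p v : R) : 0 < p -> 0 <= v ->
  powR (powR v (Num.min p^-1 1)) (Num.max p 1) = v.
Proof. by move=> p_gt0 v_ge0; rewrite -powRrM min_inv_max_mul // powRr1. Qed.

Lemma half_lt_min_inv (p : R) : 0 < p -> p < 2 -> 2^-1 < Num.min p^-1 1.
Proof.
move=> p_gt0 p_lt2; rewrite lt_min; apply/andP; split; last lra.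
by rewrite ltf_pV2 ?posrE //; lra.
Qed.

Lemma quarter_powR_lt_half (q : R) : 2^-1 < q -> powR 4^-1 q < 2^-1.
Proof.
move=> q_gt; have -> : q = 2^-1 + (q - 2^-1) by rewrite addrC subrK.
rewrite powRD; last by apply/implyP => _; rewrite invr_eq0 pnatr_eq0.
have -> : powR 4^-1 2^-1 = 2^-1 :> R.
  have -> : (4 : R)^-1 = 2^-1 ^+ 2 by rewrite exprVn expr2 -natrM.
  by rewrite powR12_sqrt ?sqr_ge0 // sqrtr_sqr ger0_norm // invr_ge0.
have : powR 4^-1 (q - 2^-1) < powR 1 (q - 2^-1).
  by apply: gt0_ltr_powR; rewrite ?subr_gt0 ?nnegrE ?invr_ge0 //; lra.
rewrite powR1; nra.
Qed.

Lemma dAE n (As : seq 'M[complex R]_n) (p : R) (rho omega : 'M[complex R]_n) :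
  0 < p -> 0 <= Dinf As p rho omega -> 0 <= Dinf As p rho rho ->
  0 <= Dinf As p omega omega ->
  dA As p rho omega = powR (Dinf As p rho omega
    - 2^-1 * (Dinf As p rho rho + Dinf As p omega omega)) (Num.min p^-1 1).
Proof. by move=> p_gt0 *; rewrite /dA /D !powR_min_inv_max. Qed.

End Exponents.

Theorem proposition6p3 (R : realType) (p : R) (hp0 : 0 < p) (hp2 : p < 2) :
  exists (n : nat) (As : seq 'M[complex R]_n) (rho tau omega : 'M[complex R]_n),
    (forall A, A \in As -> selfadj A) /\
    state rho /\ state tau /\ state omega /\
    dA As p rho omega > dA As p rho tau + dA As p tau omega.
Proof.
have p0 : p != 0 by rewrite gt_eqF.
exists 2, [:: delta_mx 0 0], (delta_mx 0 0), (const_mx 2^-1), (delta_mx 1 1).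
split; first by move=> A; rewrite inE => /eqP ->; exact: selfadj_delta.
split; first exact: state_delta.
split; first exact: state_tau.
split; first exact: state_delta.
rewrite !dAE // ?Dinf_rho0_rho1 ?Dinf_rho0_rho0 ?Dinf_rho1_rho1 ?Dinf_rho0_tau
  ?Dinf_tau_rho1 ?Dinf_tau_tau // ?invr_ge0 //.
rewrite !addr0 !add0r mulr0 subr0 powR1.
have -> : 2^-1 - 2^-1 * 2^-1 = 4^-1 :> R by field.
have := quarter_powR_lt_half (half_lt_min_inv hp0 hp2); lra.
Qed.
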